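(* Let $G$ be a finite graph with vertex weights $q_v$ and vertex momenta $p_v\in\mathbb R^d$, and let $\mathcal U_G,\mathcal V_G$ be its generalized Symanzik polynomials. For every edge $e$ of $G$ that is not a self-loop, $$\mathcal U_G=\alpha_e\,\mathcal U_{G-e}+\mathcal U_{G/e},\qquad \mathcal V_G=\alpha_e\,\mathcal V_{G-e}+\mathcal V_{G/e}.$$ Moreover, if every edge of $G$ is a self-loop, then $\mathcal U_G=\prod_e\alpha_e\prod_vq_v$ and $\mathcal V_G=\prod_e\alpha_e\sum_vp_v^2\prod_{v'\neq v}q_{v'}$.
   Context: Incidence numbers: $\epsilon_{ev}=+1$ if $e$ is not a self-loop and starts at $v$, $-1$ if not a self-loop and ends at $v$, $0$ otherwise. $Q_G$ is the $(|E|+|V|)$-square matrix indexed by $E\sqcup V$ with $(Q_G)_{ee'}=\alpha_e\delta_{ee'}$, $(Q_G)_{vv'}=q_v\delta_{vv'}$, $(Q_G)_{ev}=(Q_G)_{ve}=-i\epsilon_{ev}$; $\mathcal U_G=\det Q_G$ and $\mathcal V_G=\mathcal U_G\sum_{v,v'}p_v\cdot p_{v'}(Q_G^{-1})_{vv'}$ (for positive $\alpha,q$; both are polynomials). $G-e$ is $G$ with edge $e$ removed (vertices, weights and momenta unchanged). For $e$ joining distinct vertices $v_1,v_2$, $G/e$ is obtained by removing $e$ and identifying $v_1,v_2$ into one vertex $v_{12}$ carrying all remaining edges of $v_1,v_2$ (other edges between $v_1,v_2$ become self-loops), with weight $q_{v_{12}}=q_{v_1}+q_{v_2}$ and momentum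 $p_{v_{12}}=p_{v_1}+p_{v_2}$. *)

From HB Require Import structures.
From mathcomp Require Import all_boot all_order all_algebra.
Set Implicit Arguments. Unset Strict Implicit. Unset Printing Implicit Defensive.
Import Order.TTheory GRing.Theory Num.Theory.
Local Open Scope ring_scope.

(* A finite (multi)graph with oriented edges, edge weights alpha_e,
   vertex weights q_v and vertex momenta p_v in C^d (C a numerically
   closed field, e.g. algC, playing the role of the complex numbers). *)
Record wgraph (C : numClosedFieldType) (d : nat) := WGraph {
  vert : finType;
  edge : finType;
  src : edge -> vert;
  tgt : edge -> vert;
  alpha : edge -> C;
  qw : vert -> C;
  mom : vert -> 'rV[C]_d
}.

Section Symanzik.
Variables (C : numClosedFieldType) (d : nat).
Implicit Type G : wgraph C d.

Definition is_loop G (e : edge G) : bool := src e == tgt e.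

Definition eps G (e : edge G) (v : vert G) : C :=
  if is_loop e then 0
  else if src e == v then 1
  else if tgt e == v then -1
  else 0.

(* Q_G indexed by E ⊔ V : edges first (via enum_val), then vertices. *)
Definition QG G : 'M[C]_(#|edge G| + #|vert G|) :=
  block_mx
    (\matrix_(i, j) (if i == j then alpha (enum_val i) else 0))
    (\matrix_(i, j) (- 'i * eps (enum_val i) (enum_val j)))
    (\matrix_(i, j) (- 'i * eps (enum_val j) (enum_val i)))
    (\matrix_(i, j) (if i == j then qw (enum_val i) else 0)).

Definition vidx G (v : vert G) : 'I_(#|edge G| + #|vert G|) :=
  rshift #|edge G| (enum_rank v).

Definition dotp (u w : 'rV[C]_d) : C := \sum_(k < d) u 0 k * w 0 k.

Definition UG G : C := \det (QG G).

Definition VG G : C :=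
  UG G * \sum_(v : vert G) \sum_(v' : vert G)
           dotp (mom v) (mom v') * invmx (QG G) (vidx v) (vidx v').

Definition del G (e : edge G) : wgraph C d :=
  @WGraph C d (vert G) {f : edge G | f != e}
    (fun f => src (val f)) (fun f => tgt (val f))
    (fun f => alpha (val f)) (@qw _ _ G) (@mom _ _ G).

(* Contraction G / e for a non-loop e from v1 = src e to v2 = tgt e:
   v2 is removed and identified with v1 (which plays the role of v12). *)
Definition cvert G (e : edge G) := {v : vert G | v != tgt e}.

Definition cmap G (e : edge G) (h : src e != tgt e) (v : vert G) : cvert e :=
  insubd (exist (fun v => v != tgt e) (src e) h : cvert e) v.

Definition contr G (e : edge G) (h : src e != tgt e) : wgraph C d :=
  @WGraph C d (cvert e) {f : edge G | f != e}
    (fun f => cmap h (src (val f))) (fun f => cmap h (tgt (val f)))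
    (fun f => alpha (val f))
    (fun v => if val v == src e then qw (src e) + qw (tgt e) else qw (val v))
    (fun v => if val v == src e then mom (src e) + mom (tgt e) else mom (val v)).

End Symanzik.

From mathcomp Require Import all_boot all_order all_algebra perm ring.
Set Implicit Arguments. Unset Strict Implicit. Unset Printing Implicit Defensive.
Import Order.TTheory GRing.Theory Num.Theory.
Local Open Scope ring_scope.

(* For x : V -> C let D_G(x) be the determinant of Q_G + x x^T, the rank-one
   term living on the vertex block.  Then U_G = D_G(0), and when Q_G is
   invertible the matrix determinant lemma gives V_G = sum_k (D_G(p^k) - U_G),
   p^k being the k-th coordinate of the momenta.  Everything therefore follows
   from the identity D_G(x) = alpha_e D_{G-e}(x) + D_{G/e}(x/e) for a non-loop
   edge e, where x/e adds the values of x at the two merged endpoints.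

   Row e of
   Q_G has entries alpha_e, and -i, +i at src e, tgt e only, which is exactly
   the shape these steps need; the remaining matrix is Q_{G/e}.  Invertibility
   of Q_G comes from U_G > 0, by induction with the recursion for U_G; graphs
   made of loops have a diagonal Q_G, which gives the closed formulas. *)

Definition enumerates (I : Type) (T : eqType) (g : I -> T) (P : T -> Prop) : Prop :=
  [/\ injective g, forall i, P (g i) & forall t, P t -> exists i, t = g i].

Lemma enumerates_ext (I : Type) (T : eqType) (g : I -> T) (P Q : T -> Prop) :
  (forall t, P t <-> Q t) -> enumerates g P -> enumerates g Q.
Proof.
move=> PQ [inj_g Pg ontoP]; split=> //.
- by move=> i; apply/PQ.
- by move=> t /PQ; exact: ontoP.
Qed.

Lemma enumerates_enum_val (T' : finType) (T : eqType) (h : T' -> T) (P : T -> Prop) :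
  enumerates h P -> enumerates (h \o @enum_val T' predT) P.
Proof.
case=> inj_h Ph ontoP; split=> //.
- by move=> i j /inj_h/enum_val_inj.
- by move=> i; exact: Ph.
- by move=> t /ontoP[x ->]; exists (enum_rank x); rewrite /= enum_rankK.
Qed.

Definition cons_enum (T : Type) n (t0 : T) (g : 'I_n -> T) (i : 'I_n.+1) : T :=
  if unlift ord0 i is Some j then g j else t0.

Lemma cons_enum0 (T : Type) n (t0 : T) (g : 'I_n -> T) : cons_enum t0 g ord0 = t0.
Proof. by rewrite /cons_enum unlift_none. Qed.

Lemma cons_enum_lift (T : Type) n (t0 : T) (g : 'I_n -> T) j :
  cons_enum t0 g (lift ord0 j) = g j.
Proof. by rewrite /cons_enum liftK. Qed.

Lemma enumerates_cons (T : eqType) n (t0 : T) (g : 'I_n -> T) (P : T -> Prop) :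
  P t0 -> enumerates g (fun t => P t /\ t <> t0) -> enumerates (cons_enum t0 g) P.
Proof.
move=> Pt0 [inj_g Pg ontoP]; split.
- move=> i1 i2; case: (unliftP ord0 i1) => [j|] ->; case: (unliftP ord0 i2) => [j'|] ->;
    rewrite ?cons_enum_lift ?cons_enum0 //.
  + by move/inj_g ->.
  + by move=> e; case: (Pg j) => _ [].
  + by move=> e; case: (Pg j') => _ []; rewrite e.
- move=> i; case: (unliftP ord0 i) => [j|] /= ->; rewrite ?cons_enum0 ?cons_enum_lift //.
  by case: (Pg j).
- move=> t Pt; have [->|nt0] := eqVneq t t0; first by exists ord0; rewrite cons_enum0.
  by have [j ->] := ontoP t (conj Pt (elimN eqP nt0)); exists (lift ord0 j); rewrite cons_enum_lift.
Qed.

Section Determinants.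
Variable R : comNzRingType.

Lemma det_corner_update n (A B : 'M[R]_n.+1) :
  (forall i j, (i != ord0) || (j != ord0) -> A i j = B i j) ->
  \det A = (A ord0 ord0 - B ord0 ord0) * \det (row' ord0 (col' ord0 A)) + \det B.
Proof.
move=> eqAB.
have cofE j : cofactor A ord0 j = cofactor B ord0 j.
  rewrite /cofactor; congr (_ * \det _); apply/matrixP => i k; rewrite !mxE.
  by apply: eqAB; rewrite eq_sym neq_lift.
rewrite (expand_det_row A ord0) (expand_det_row B ord0) !big_ord_recl addrA.
congr (_ + _); last first.
  by apply: eq_bigr => j _; rewrite cofE eqAB // eq_sym neq_lift orbT.
by rewrite -cofE /cofactor addn0 expr0 mul1r -mulrDl subrK.
Qed.

Lemma det_transvection n (b c : 'I_n) : b != c -> \det (1%:M + delta_mx c b : 'M[R]_n) = 1.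
Proof.
have lower (x y : 'I_n) : (y < x)%N -> \det (1%:M + delta_mx x y : 'M[R]_n) = 1.
  move=> lt_yx; rewrite det_trig; last first.
    apply/is_trig_mxP => i j lt_ij; rewrite !mxE -val_eqE /= (ltn_eqF lt_ij) add0r.
    have [ei|//] := eqVneq i x; have [ej|//] := eqVneq j y.
    by rewrite ei ej in lt_ij; move: (ltn_trans lt_ij lt_yx); rewrite ltnn.
  rewrite big1 // => i _; rewrite !mxE eqxx.
  have [ei|] := eqVneq i x; have [ej|] := eqVneq i y; rewrite ?andbF ?addr0 //.
  by move: lt_yx; rewrite -ei -ej ltnn.
rewrite neq_ltn => /orP[lt_bc | lt_cb]; first exact: lower.
by rewrite -det_tr linearD /= trmx_delta trmx1 lower.
Qed.

Lemma mul_delta_mxl m n p (c : 'I_m) (b : 'I_n) (A : 'M[R]_(n, p)) i k :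
  (delta_mx c b *m A) i k = (i == c)%:R * A b k.
Proof.
rewrite mxE (bigD1 b) //= big1 => [|l /negbTE nl]; rewrite mxE ?eqxx ?andbT ?addr0 //.
by rewrite nl andbF mul0r.
Qed.

Lemma mul_delta_mxr m n p (b : 'I_n) (c : 'I_p) (A : 'M[R]_(m, n)) i k :
  (A *m delta_mx b c) i k = (k == c)%:R * A i b.
Proof.
rewrite mxE (bigD1 b) //= big1 => [|l /negbTE nl]; rewrite mxE ?eqxx /= ?addr0.
  by rewrite mulrC.
by rewrite nl mulr0.
Qed.

(* [fold_kernel M b c] adds row b to row c and then column b to column c. *)
Definition fold_kernel (T : eqType) (M : T -> T -> R) (b c : T) (s t : T) : R :=
  M s t + (s == c)%:R * M b t + (t == c)%:R * M s b
  + ((s == c) && (t == c))%:R * M b b.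

(* Folding row/column b into row/column c is a congruence by a transvection,
   hence does not change the determinant. *)
Lemma det_fold n (A : 'M[R]_n) (b c : 'I_n) : b != c ->
  \det (\matrix_(i, j) fold_kernel A b c i j) = \det A.
Proof.
move=> neq_bc; pose P : 'M[R]_n := 1%:M + delta_mx c b.
have -> : \matrix_(i, j) fold_kernel A b c i j = P *m A *m P^T.
  apply/matrixP => i j; rewrite linearD /= trmx1 trmx_delta mulmxDr mulmx1.
  rewrite mulmxDl mul1mx mulmxDl [RHS]mxE.
  rewrite [X in _ = X + _]mxE [X in _ = _ + X]mxE.
  rewrite !mul_delta_mxr mul_delta_mxl mxE mul_delta_mxl /fold_kernel.
  by rewrite mulrA -natrM mulnb andbC !addrA.
by rewrite !det_mulmx det_tr det_transvection // mul1r mulr1.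
Qed.

Definition lift2 n (i : 'I_n) : 'I_n.+2 := lift ord0 (lift ord0 i).

Lemma det_pivot_pair n (A : 'M[R]_n.+2) :
  (forall j, j != lift ord0 ord0 -> A ord0 j = 0) ->
  (forall i, i != lift ord0 ord0 -> A i ord0 = 0) ->
  \det A = - (A ord0 (lift ord0 ord0) * A (lift ord0 ord0) ord0)
           * \det (\matrix_(i, j) A (lift2 i) (lift2 j)).
Proof.
move=> row0 col0.
have lift10 : lift (lift ord0 ord0) (@ord0 n) = ord0 by apply: val_inj.
rewrite (expand_det_row A ord0) (bigD1 (lift ord0 ord0)) //= big1 ?addr0;
  last by move=> j /row0 ->; rewrite mul0r.
rewrite /cofactor (expand_det_col _ ord0) (bigD1 ord0) //= big1 ?addr0; last first.
  by move=> i ni; rewrite !mxE lift10 col0 ?mul0r // (inj_eq lift_inj).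
rewrite !mxE lift10 /cofactor expr1 expr0 mul1r mulN1r mulrN mulNr mulrA.
congr (- (_ * \det _)); apply/matrixP => i j; rewrite !mxE.
by congr (A _ _); apply: val_inj.
Qed.

Definition kernel_mx (T : Type) n (M : T -> T -> R) (g : 'I_n -> T) : 'M[R]_n :=
  \matrix_(i, j) M (g i) (g j).

(* Two enumerations of the same set differ by a permutation s, and
   kernel_mx M g1 = P_s * kernel_mx M g2 * P_s^T, so the determinants agree. *)
Lemma det_kernel_reindex (T : eqType) (M : T -> T -> R) (P : T -> Prop) n m
    (g1 : 'I_n -> T) (g2 : 'I_m -> T) :
  enumerates g1 P -> enumerates g2 P -> \det (kernel_mx M g1) = \det (kernel_mx M g2).
Proof.
move=> [inj1 P1 onto1] [inj2 P2 onto2].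
have ex12 i : exists j, g1 i == g2 j by have [j ->] := onto2 _ (P1 i); exists j.
have ex21 j : exists i, g2 j == g1 i by have [i ->] := onto1 _ (P2 j); exists i.
pose f12 i := xchoose (ex12 i); pose f21 j := xchoose (ex21 j).
have f12E i : g1 i = g2 (f12 i) by apply/eqP; exact: (xchooseP (ex12 i)).
have f21E j : g2 j = g1 (f21 j) by apply/eqP; exact: (xchooseP (ex21 j)).
have inj12 : injective f12 by move=> i i' e; apply: inj1; rewrite !f12E e.
have inj21 : injective f21 by move=> j j' e; apply: inj2; rewrite !f21E e.
have nm : n = m.
  have := @leq_card _ _ _ inj12; have := @leq_card _ _ _ inj21.
  by rewrite !card_ord => le_mn le_nm; apply/eqP; rewrite eqn_leq le_mn le_nm.
subst m; pose s := perm inj12.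
have -> : kernel_mx M g1 = perm_mx s *m kernel_mx M g2 *m (perm_mx s)^T.
  rewrite tr_perm_mx -col_permE -row_permE.
  by apply/matrixP => i j; rewrite !mxE !permE -!f12E.
by rewrite !det_mulmx det_tr det_perm mulrC mulrA -expr2 sqrr_sign mul1r.
Qed.

Definition detK (T : finType) (M : T -> T -> R) : R :=
  \det (kernel_mx M (@enum_val T predT)).

Lemma detK_enum (T : finType) (M : T -> T -> R) n (g : 'I_n -> T) :
  enumerates g (fun _ => True) -> detK M = \det (kernel_mx M g).
Proof.
apply: det_kernel_reindex; split=> // [|t _]; first exact: enum_val_inj.
by exists (enum_rank t); rewrite enum_rankK.
Qed.

Lemma eq_detK (T : finType) (M N : T -> T -> R) : M =2 N -> detK M = detK N.
Proof. by move=> eqMN; congr (\det _); apply/matrixP => i j; rewrite !mxE eqMN. Qed.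

Definition zero_at (T : eqType) (M : T -> T -> R) (t0 : T) (s t : T) : R :=
  if (s == t0) && (t == t0) then 0 else M s t.

Lemma zero_atE (T : eqType) (M : T -> T -> R) (t0 s t : T) :
  (s != t0) || (t != t0) -> zero_at M t0 s t = M s t.
Proof. by rewrite /zero_at; case: (s == t0); case: (t == t0). Qed.

Lemma detK_delete (T T' : finType) (M : T -> T -> R) (t0 : T) (h : T' -> T) :
  enumerates h (fun t => t <> t0) ->
  detK M = M t0 t0 * detK (fun x y => M (h x) (h y)) + detK (zero_at M t0).
Proof.
move=> hh; pose g := cons_enum t0 (h \o @enum_val T' predT).
have gg : enumerates g (fun _ => True).
  apply: enumerates_cons => //; apply: enumerates_ext (enumerates_enum_val hh).
  by move=> t; split=> [|[]].
have g_t0 i : (g i == t0) = (i == ord0).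
  case: hh => _ h_t0 _; rewrite /g; case: (unliftP ord0 i) => [j|] ->.
  - rewrite cons_enum_lift [lift _ _ == _]eq_sym (negbTE (neq_lift _ _)).
    exact/negbTE/eqP/h_t0.
  - by rewrite cons_enum0 !eqxx.
rewrite !(detK_enum _ gg) (det_corner_update (B := kernel_mx (zero_at M t0) g)).
- rewrite /kernel_mx !mxE /g cons_enum0 /zero_at eqxx subr0 /detK.
  by congr (_ * \det _ + _); apply/matrixP => i j; rewrite !mxE !cons_enum_lift.
- move=> i j nij; rewrite !mxE /zero_at !g_t0.
  by case: ifP => // /andP[/eqP ei /eqP ej]; move: nij; rewrite ei ej eqxx.
Qed.

Lemma detK_fold (T : finType) (M : T -> T -> R) (b c : T) :
  b != c -> detK (fold_kernel M b c) = detK M.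
Proof.
move=> neq_bc; rewrite /detK -[RHS](det_fold _ (b := enum_rank b) (c := enum_rank c)).
  congr (\det _); apply/matrixP => i j; rewrite !mxE /fold_kernel !mxE !enum_rankK.
  by rewrite -!(inj_eq enum_val_inj) !enum_rankK.
by rewrite (inj_eq enum_rank_inj).
Qed.

Lemma detK_pivot (T T' : finType) (M : T -> T -> R) (a b : T) (h : T' -> T) :
  b != a -> enumerates h (fun t => t <> a /\ t <> b) ->
  (forall t, t != b -> M a t = 0 /\ M t a = 0) ->
  detK M = - (M a b * M b a) * detK (fun x y => M (h x) (h y)).
Proof.
move=> neq_ba hh Mab; pose g := cons_enum a (cons_enum b (h \o @enum_val T' predT)).
have gb : enumerates (cons_enum b (h \o @enum_val T' predT)) (fun t => t <> a).
  by apply: enumerates_cons; [exact/eqP | exact: enumerates_enum_val].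
have gg : enumerates g (fun _ => True).
  by apply: enumerates_cons => //; apply: enumerates_ext gb => t; split=> [|[]].
have g_b i : (g i == b) = (i == lift ord0 ord0).
  by case: gg => inj_g _ _; rewrite -(inj_eq inj_g) /g !cons_enum_lift cons_enum0.
rewrite (detK_enum _ gg) det_pivot_pair /kernel_mx.
- rewrite !mxE /g !cons_enum_lift !cons_enum0 /detK; congr (_ * \det _).
  by apply/matrixP => i j; rewrite !mxE /lift2 !cons_enum_lift.
- by move=> j nj; rewrite mxE /g cons_enum0; apply: (proj1 (Mab _ _)); rewrite -/g g_b.
- by move=> i ni; rewrite mxE /g cons_enum0; apply: (proj2 (Mab _ _)); rewrite -/g g_b.
Qed.

Lemma fold_kernel_zero_at (T : eqType) (M : T -> T -> R) (t0 b c s t : T) :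
  s != t0 -> b != t0 -> fold_kernel (zero_at M t0) b c s t = fold_kernel M b c s t.
Proof. by move=> s_t0 b_t0; rewrite /fold_kernel !zero_atE ?s_t0 ?b_t0 ?orbT. Qed.

(* Contraction step: if row and column a vanish outside {b, c} with opposite
   entries at b and c, folding b into c makes a a pivot pair with b, which
   leaves the folded kernel restricted to T minus {a, b}. *)
Lemma detK_contract (T T' : finType) (M : T -> T -> R) (a b c : T) (h : T' -> T) :
  b != a -> c != a -> c != b -> enumerates h (fun t => t <> a /\ t <> b) ->
  (forall t, t != b -> t != c -> M a t = 0 /\ M t a = 0) ->
  M a c = - M a b -> M c a = - M b a ->
  detK M = - (M a b * M b a) * detK (fun x y => fold_kernel M b c (h x) (h y)).
Proof.
move=> ba ca cb hh Mabc Mac Mca.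
have ac : (a == c) = false by rewrite eq_sym (negbTE ca).
have bc : (b == c) = false by rewrite eq_sym (negbTE cb).
rewrite -(detK_fold M (b := b) (c := c)) 1?eq_sym //.
rewrite (detK_pivot ba hh) /fold_kernel ?ac ?bc ?mul0r ?addr0 // => t nb.
have [-> | nc] := eqVneq t c; rewrite /= !mul0r !addr0.
- by rewrite !mul1r Mac Mca !addNr.
- exact: Mabc.
Qed.

End Determinants.

Lemma det_rank1_update (R : fieldType) n (Q : 'M[R]_n) (y : 'cV[R]_n) : Q \in unitmx ->
  \det (Q + y *m y^T) = \det Q * (1 + (y^T *m invmx Q *m y) 0 0).
Proof.
move=> uQ; pose X : 'M[R]_(n + 1) := block_mx Q y (- y^T) 1%:M.
have lowerX : X = block_mx (Q + y *m y^T) y 0 1%:M *m block_mx 1%:M 0 (- y^T) 1%:M.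
  by rewrite mulmx_block ?mulmx1 ?mulmx0 ?mul0mx ?mul1mx ?addr0 ?add0r ?mulmxN addrK.
have upperX : X = block_mx Q 0 (- y^T) (1%:M + y^T *m invmx Q *m y)
                  *m block_mx 1%:M (invmx Q *m y) 0 1%:M.
  rewrite mulmx_block ?mulmx1 ?mulmx0 ?mul0mx ?mul1mx ?addr0 ?add0r mulKVmx //.
  by rewrite mulNmx mulmxA addrCA addNr addr0.
have := congr1 determinant upperX; rewrite {1}lowerX !det_mulmx.
rewrite det_ublock det_lblock det_lblock det_ublock !det1 !mulr1 det_mx11 => ->.
by rewrite !mxE eqxx.
Qed.

Lemma if_merge (V : eqType) (R : pzRingType) (f : V -> R) (u v1 v2 : V) :
  (if u == v1 then f v1 + f v2 else f u) = f u + (u == v1)%:R * f v2.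
Proof. by case: eqP => [->|_]; rewrite ?mul1r ?mul0r ?addr0. Qed.

Section SymanzikDeterminants.
Variables (C : numClosedFieldType) (d : nat).
Implicit Type G : wgraph C d.

Local Notation EV G := (edge G + vert G)%type.

(* Incidence numbers as a difference of indicators (loops give 0 = 1 - 1). *)
Lemma epsE G (f : edge G) (v : vert G) : eps f v = (src f == v)%:R - (tgt f == v)%:R.
Proof.
rewrite /eps /is_loop; case: (src f =P tgt f) => [-> | nloop]; first by rewrite subrr.
case: (src f =P v) => [<- | _]; case: (tgt f =P _) => [e | _];
  rewrite /= ?mulr0n ?mulr1n ?subr0 ?sub0r //.
by case: nloop.
Qed.

(* The kernel on E + V of Q_G with the rank-one term x x^T added to the
   vertex block; its determinant D_G(x) interpolates U_G (x = 0) and V_G. *)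
Definition qkernel G (x : vert G -> C) (s t : EV G) : C :=
  match s, t with
  | inl f, inl f' => (f == f')%:R * alpha f
  | inl f, inr v => - 'i * eps f v
  | inr v, inl f => - 'i * eps f v
  | inr v, inr w => (v == w)%:R * qw v + x v * x w
  end.

Definition ev_index G (i : 'I_(#|edge G| + #|vert G|)) : EV G :=
  match split i with inl a => inl (enum_val a) | inr b => inr (enum_val b) end.

Lemma enumerates_ev_index G : enumerates (@ev_index G) (fun _ => True).
Proof.
split=> //.
- move=> i j; rewrite /ev_index.
  case: (split_ordP i) => a ->; case: (split_ordP j) => b -> //.
  + by case=> /enum_val_inj ->.
  + by case=> /enum_val_inj ->.
- case=> [f | v] _.
  + by exists (lshift _ (enum_rank f)); rewrite /ev_index (unsplitK (inl _)) enum_rankK.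
  + by exists (rshift _ (enum_rank v)); rewrite /ev_index (unsplitK (inr _)) enum_rankK.
Qed.

Definition yvec G (x : vert G -> C) : 'cV[C]_(#|edge G| + #|vert G|) :=
  \col_i (match split i with inl _ => 0 | inr b => x (enum_val b) end).

Lemma qkernel_mx G (x : vert G -> C) :
  kernel_mx (qkernel x) (@ev_index G) = QG G + yvec x *m (yvec x)^T.
Proof.
apply/matrixP => i j; rewrite /QG /kernel_mx [LHS]mxE [RHS]mxE [(_ *m _) i j]mxE big_ord1.
case: (split_ordP i) => a ->; case: (split_ordP j) => b ->;
  rewrite ?block_mxEul ?block_mxEur ?block_mxEdl ?block_mxEdr !mxE /ev_index
    ?(unsplitK (inl _)) ?(unsplitK (inr _)) /= ?(inj_eq enum_val_inj) ?mul0r ?mulr0 ?addr0 //;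
  by case: eqP; rewrite ?mul1r ?mul0r.
Qed.

Definition DG G (x : vert G -> C) : C := detK (qkernel x).

Lemma DG_rank1 G (x : vert G -> C) : DG x = \det (QG G + yvec x *m (yvec x)^T).
Proof. by rewrite /DG (detK_enum _ (enumerates_ev_index G)) qkernel_mx. Qed.

Lemma UG_DG G : UG G = DG (fun _ : vert G => 0).
Proof.
rewrite DG_rank1 (_ : yvec _ = 0) ?mul0mx ?addr0 //.
by apply/matrixP => i j; rewrite !mxE; case: split.
Qed.

Lemma DG_ext G (x y : vert G -> C) : x =1 y -> DG x = DG y.
Proof.
move=> exy; apply: eq_detK => [[f|v] [f'|w]] //=.
by rewrite !exy.
Qed.

Lemma quad_yvec G (x : vert G -> C) (Q : 'M[C]_(#|edge G| + #|vert G|)) :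
  ((yvec x)^T *m Q *m yvec x) 0 0 =
  \sum_(v : vert G) \sum_(v' : vert G) x v' * x v * Q (vidx v') (vidx v).
Proof.
rewrite mxE big_split_ord /= big1 ?add0r; last first.
  by move=> a _; rewrite !mxE (unsplitK (inl _)) /= mulr0.
rewrite (big_enum_val (fun v => \sum_(v' : vert G) x v' * x v * Q (vidx v') (vidx v))) /=.
apply: eq_bigr => b _; rewrite !mxE (unsplitK (inr _)) /=.
rewrite big_distrl /= big_split_ord /= big1 ?add0r; last first.
  by move=> a _; rewrite !mxE (unsplitK (inl _)) /= !mul0r.
rewrite (big_enum_val (fun v' => x v' * x (enum_val b) * Q (vidx v') (vidx (enum_val b)))) /=.
apply: eq_bigr => a _; rewrite !mxE (unsplitK (inr _)) /= /vidx !enum_valK.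
by rewrite mulrAC.
Qed.

(* Polarisation of V_G: with p^k the k-th coordinate of the momenta,
   V_G = sum_k (D_G(p^k) - U_G), by the matrix determinant lemma. *)
Lemma VG_DG G : QG G \in unitmx ->
  VG G = \sum_(k < d) (DG (fun v : vert G => mom v 0 k) - UG G).
Proof.
move=> unitQ.
have termE k : DG (fun v : vert G => mom v 0 k) - UG G =
    UG G * \sum_(v : vert G) \sum_(v' : vert G)
      mom v' 0 k * mom v 0 k * invmx (QG G) (vidx v') (vidx v).
  by rewrite DG_rank1 det_rank1_update // quad_yvec /UG mulrDr mulr1 addrAC subrr add0r.
rewrite (eq_bigr _ (fun k _ => termE k)) /VG -mulr_sumr; congr (_ * _).
symmetry; rewrite exchange_big; under eq_bigr do rewrite exchange_big.
rewrite exchange_big; apply: eq_bigr => v _; apply: eq_bigr => v' _.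
by rewrite /dotp mulr_suml.
Qed.

Definition del_embed G (e : edge G) (s : EV (del e)) : EV G :=
  match s with inl f => inl (val f) | inr v => inr v end.

Lemma enumerates_del_embed G (e : edge G) : enumerates (@del_embed G e) (fun t => t <> inl e).
Proof.
split.
- by case=> [f|v] [f'|v'] //= [] => [/val_inj|] ->.
- by case=> [f|v] //= [] /eqP; apply/negP; exact: (valP f).
- case=> [f|v] ne; last by exists (inr v).
  have nf : f != e by apply/eqP => ef; apply: ne; rewrite ef.
  by exists (inl (exist _ f nf)).
Qed.

Lemma qkernel_del G (e : edge G) (x : vert G -> C) (s t : EV (del e)) :
  qkernel (G := del e) x s t = qkernel x (del_embed s) (del_embed t).
Proof. by case: s => [f|v]; case: t => [f'|w]. Qed.

Definition merge G (e : edge G) (h : src e != tgt e) (x : vert G -> C)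
    (v : vert (contr h)) : C :=
  if val v == src e then x (src e) + x (tgt e) else x (val v).

Definition contr_embed G (e : edge G) (h : src e != tgt e) (s : EV (contr h)) : EV G :=
  match s with inl f => inl (val f) | inr v => inr (val v) end.

Lemma enumerates_contr_embed G (e : edge G) (h : src e != tgt e) :
  enumerates (@contr_embed G e h) (fun t => t <> inl e /\ t <> inr (tgt e)).
Proof.
split.
- by case=> [f|v] [f'|v'] //= [] /val_inj ->.
- case=> [f|v] /=; split=> // [] /eqP; apply/negP.
  + exact: (valP f).
  + exact: (valP v).
- case=> [f|v] [nf nv].
  + have ne : f != e by apply/eqP => ef; apply: nf; rewrite ef.
    by exists (inl (exist _ f ne)).
  + have ne : v != tgt e by apply/eqP => ev; apply: nv; rewrite ev.
    by exists (inr (exist _ v ne)).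
Qed.

Lemma cmap_indicator G (e : edge G) (h : src e != tgt e) (a : vert G) (w : vert (contr h)) :
  (cmap h a == w)%:R = (a == val w)%:R + (val w == src e)%:R * (a == tgt e)%:R :> C.
Proof.
rewrite -val_eqE /cmap val_insubd /=; have /negbTE tgt_w : tgt e != val w.
  by rewrite eq_sym; exact: (valP w).
case: (a =P tgt e) => [-> | _] /=; last by rewrite mulr0 addr0.
by rewrite tgt_w eq_sym mulr1 add0r.
Qed.

Lemma eps_contr G (e : edge G) (h : src e != tgt e) (f : edge (contr h)) (v : vert (contr h)) :
  eps f v = eps (val f) (val v) + (val v == src e)%:R * eps (val f) (tgt e).
Proof. by rewrite !epsE /= !cmap_indicator; ring. Qed.

Lemma qkernel_contr G (e : edge G) (h : src e != tgt e) (x : vert G -> C)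
    (s t : EV (contr h)) :
  qkernel (merge (h := h) x) s t
  = fold_kernel (qkernel x) (inr (tgt e)) (inr (src e)) (contr_embed s) (contr_embed t).
Proof.
rewrite /fold_kernel; case: s => [f|v]; case: t => [f'|w] /=;
  rewrite -?sum_eqE /= ?andbF ?mul0r ?addr0 ?eps_contr.
- by [].
- by ring.
- by ring.
have /negbTE tgt_w : tgt e != val w by rewrite eq_sym; exact: (valP w).
have /negbTE v_tgt : val v != tgt e := valP v.
have same_src : (val v == val w)%:R * (val v == src e)%:R
              = (val v == src e)%:R * (val w == src e)%:R :> C.
  by case: (val v =P src e) => [->|_]; rewrite ?mulr0 ?mul0r // eq_sym mulr1 mul1r.
rewrite /merge !if_merge -val_eqE /= tgt_w v_tgt eqxx mulrDr mulrA same_src.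
rewrite -mulnb natrM mulr0n mulr1n !mul0r !add0r mul1r.
by ring.
Qed.

(* Row e of Q_G is
   alpha_e at e and -i * eps e v at v = src e, tgt e, so detK_delete splits off
   alpha_e * D_{G-e} and detK_contract identifies the rest with D_{G/e}; the
   pivot factor is -(i * i) = 1. *)
Lemma DG_delete_contract G (e : edge G) (h : src e != tgt e) (x : vert G -> C) :
  DG x = alpha e * DG (G := del e) x + DG (merge (h := h) x).
Proof.
rewrite /DG (detK_delete _ (enumerates_del_embed e)) /= eqxx mul1r.
congr (_ * _ + _); first by apply: eq_detK => s t; rewrite qkernel_del.
have /negbTE tgt_src : tgt e != src e by rewrite eq_sym.
have eps_src : eps e (src e) = 1 by rewrite epsE eqxx tgt_src subr0.
have eps_tgt : eps e (tgt e) = -1 by rewrite epsE (negbTE h) eqxx sub0r.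
rewrite (detK_contract (b := inr (tgt e)) (c := inr (src e)) _ _ _
           (enumerates_contr_embed h)) //=.
- rewrite /zero_at -?sum_eqE /= andbF eps_tgt mulrN1 opprK mulCii opprK mul1r.
  apply: eq_detK => s t; rewrite fold_kernel_zero_at ?qkernel_contr //.
  by case: s => [f|v] //=; rewrite -?sum_eqE /=; exact: (valP f).
- move=> t nt ns; have [-> | nte] := eqVneq t (inl e); first by rewrite /zero_at eqxx.
  rewrite !zero_atE ?nte ?orbT //; case: t nt ns nte => [f|v] /=; rewrite -?sum_eqE /=.
  + by move=> _ _ /negbTE nfe; rewrite eq_sym nfe /= !mul0r.
  + move=> nt ns _; suff -> : eps e v = 0 by rewrite mulr0.
    by rewrite epsE [src e == v]eq_sym (negbTE ns) [tgt e == v]eq_sym (negbTE nt) subrr.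
- by rewrite !zero_atE ?orbT //= eps_src eps_tgt mulrN1 opprK mulr1.
- by rewrite !zero_atE //= eps_src eps_tgt mulrN1 opprK mulr1.
Qed.

Lemma UG_delete_contract G (e : edge G) (h : src e != tgt e) :
  UG G = alpha e * UG (del e) + UG (contr h).
Proof.
rewrite !UG_DG (DG_delete_contract h); congr (_ + _).
by apply: DG_ext => v; rewrite /merge addr0; case: ifP.
Qed.

(* V_G satisfies the same recursion, by linearity of VG_DG; the merged
   momentum coordinates are exactly merge (p^k). *)
Lemma VG_delete_contract G (e : edge G) (h : src e != tgt e) :
  QG G \in unitmx -> QG (del e) \in unitmx -> QG (contr h) \in unitmx ->
  VG G = alpha e * VG (del e) + VG (contr h).
Proof.
move=> unitG unitD unitC.
rewrite !VG_DG // mulr_sumr -big_split (UG_delete_contract h); apply: eq_bigr => k _ /=.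
rewrite (DG_delete_contract h) mulrBr opprD addrACA; congr (_ + (_ - _)).
by apply: DG_ext => v; rewrite /merge /=; case: ifP; rewrite ?mxE.
Qed.

Definition diag_weight G (i : 'I_(#|edge G| + #|vert G|)) : C :=
  match split i with inl a => alpha (enum_val a) | inr b => qw (enum_val b) end.

(* When all edges are loops every incidence number vanishes: Q_G is diagonal. *)
Lemma QG_loops G : (forall e : edge G, is_loop e) ->
  QG G = diag_mx (\row_i diag_weight i).
Proof.
move=> loops; have eps0 (f : edge G) v : eps f v = 0 by rewrite /eps loops.
apply/matrixP => i j; rewrite /QG /diag_weight.
case: (split_ordP i) => a ->; case: (split_ordP j) => b ->;
  rewrite ?block_mxEul ?block_mxEur ?block_mxEdl ?block_mxEdr !mxE ?eq_shift
    ?(unsplitK (inl _)) ?(unsplitK (inr _)) ?eps0 ?mulr0 //=.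
- by case: eqP => [-> | _]; rewrite ?mulr1n ?mulr0n.
- by case: eqP => [-> | _]; rewrite ?mulr1n ?mulr0n.
Qed.

Lemma UG_loops G : (forall e : edge G, is_loop e) ->
  UG G = (\prod_(e : edge G) alpha e) * \prod_(v : vert G) qw v.
Proof.
have prod_enum (T : finType) (F : T -> C) : \prod_(i < #|T|) F (enum_val i) = \prod_t F t.
  by rewrite -(big_enum_val F).
move=> loops; rewrite /UG QG_loops // det_diag big_split_ord /=.
rewrite -(prod_enum _ (@alpha _ _ G)) -(prod_enum _ (@qw _ _ G)).
congr (_ * _); apply: eq_bigr => a _;
  by rewrite mxE /diag_weight ?(unsplitK (inl _)) ?(unsplitK (inr _)).
Qed.

(* Closed formula for V_G when every edge is a loop: Q_G^-1 is diagonal with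
   the entries 1 / q_v on the vertex block. *)
Lemma VG_loops G : (forall e : edge G, is_loop e) ->
  (forall e : edge G, alpha e != 0) -> (forall v : vert G, qw v != 0) ->
  VG G = (\prod_(e : edge G) alpha e) *
         \sum_(v : vert G) (dotp (mom v) (mom v) * \prod_(v' : vert G | v' != v) qw v').
Proof.
move=> loops alpha0 qw0.
have weight0 (i : 'I_(#|edge G| + #|vert G|)) : diag_weight i != 0.
  by rewrite /diag_weight; case: (split i) => a; [exact: alpha0 | exact: qw0].
pose Dinv := diag_mx (\row_(i < #|edge G| + #|vert G|) (diag_weight i)^-1).
have invQ : invmx (QG G) = Dinv.
  have QDinv : QG G *m Dinv = 1%:M.
    rewrite QG_loops // mul_diag_mx; apply/matrixP => i j; rewrite !mxE.
    by have [->|_] := eqVneq i j; rewrite ?mulr1n ?mulfV ?mulr0n ?mulr0.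
  have [unitQ _] := mulmx1_unit QDinv.
  by rewrite -[Dinv](mulKmx unitQ) QDinv mulmx1.
have row_v v : \sum_(v' : vert G) dotp (mom v) (mom v') * Dinv (vidx v) (vidx v')
    = dotp (mom v) (mom v) / qw v.
  rewrite (bigD1 v) //= big1 ?addr0 => [|v' nv'].
    by rewrite !mxE eqxx mulr1n /diag_weight /vidx (unsplitK (inr _)) enum_rankK.
  by rewrite !mxE /vidx eq_rshift (inj_eq enum_rank_inj) eq_sym (negbTE nv') mulr0n mulr0.
rewrite /VG invQ UG_loops // (eq_bigr _ (fun v _ => row_v v)) -mulrA; congr (_ * _).
rewrite mulr_sumr; apply: eq_bigr => v _.
by rewrite (bigD1 v) //= mulrC -mulrA mulKf.
Qed.

Lemma card_del_edges G (e : edge G) : #|edge (del e)| = #|edge G|.-1.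
Proof. by rewrite card_sig -(cardC1 e); apply: eq_card => f; rewrite !inE. Qed.

(* U_G > 0 for positive weights, by induction on the number of edges: graphs
   of loops are handled by UG_loops, otherwise deletion-contraction expresses
   U_G as a sum of positive terms. *)
Lemma UG_gt0 G : (forall e : edge G, 0 < alpha e) -> (forall v : vert G, 0 < qw v) ->
  0 < UG G.
Proof.
move cardE: #|edge G| => n; elim: n G cardE => [|n IH] G cardE alpha_gt0 qw_gt0;
  have [e nloop | loops] := pickP (fun e : edge G => ~~ is_loop e).
2,4: by rewrite UG_loops ?mulr_gt0 ?prodr_gt0 // => e; apply/negbFE/loops.
  by move/eqP: cardE; rewrite -cardsT cards_eq0 => /eqP/setP/(_ e); rewrite !inE.
have cardD : #|edge (del e)| = n by rewrite card_del_edges cardE.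
have h : src e != tgt e := nloop.
rewrite (UG_delete_contract h) addr_gt0 ?mulr_gt0 ?IH // => [f | f | v] /=.
- exact: alpha_gt0.
- exact: alpha_gt0.
- by case: ifP => _; rewrite ?addr_gt0.
Qed.

Lemma QG_unit G :
  (forall e : edge G, 0 < alpha e) -> (forall v : vert G, 0 < qw v) -> QG G \in unitmx.
Proof.
by move=> alpha_gt0 qw_gt0; rewrite unitmxE unitfE; exact: lt0r_neq0 (UG_gt0 alpha_gt0 qw_gt0).
Qed.

End SymanzikDeterminants.

Theorem theorem3p3 (C : numClosedFieldType) (d : nat) (G : wgraph C d)
  (halpha : forall e : edge G, 0 < alpha e)
  (hq : forall v : vert G, 0 < qw v)
  (hp : forall (v : vert G) (k : 'I_d), mom v 0 k \is Num.real) :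
  (forall (e : edge G) (h : src e != tgt e),
      UG G = alpha e * UG (del e) + UG (contr h) /\
      VG G = alpha e * VG (del e) + VG (contr h)) /\
  ((forall e : edge G, is_loop e) ->
      UG G = (\prod_(e : edge G) alpha e) * \prod_(v : vert G) qw v /\
      VG G = (\prod_(e : edge G) alpha e) *
             \sum_(v : vert G) (dotp (mom v) (mom v) *
                                \prod_(v' : vert G | v' != v) qw v')).
Proof.
have unit_del (e : edge G) : QG (del e) \in unitmx by apply: QG_unit => // f; exact: halpha.
have unit_contr (e : edge G) (h : src e != tgt e) : QG (contr h) \in unitmx.
  apply: QG_unit => [f | v /=]; first exact: halpha.
  by case: ifP => _; rewrite ?addr_gt0.
split=> [e h | loops].
  split; first exact: UG_delete_contract.
  by apply: VG_delete_contract; [exact: QG_unit | exact: unit_del | exact: unit_contr].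
split; first exact: UG_loops.
by apply: VG_loops => // [e | v]; apply: lt0r_neq0.
Qed.
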